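(* Let $\mathcal{I}$ be an independent configuration of $d$ doors in which every door has the same fundamental distribution $p$, and let $A_{\mathrm{simp}}=(1,2,\dots,d)^\infty$ be the knock sequence that repeatedly knocks on doors $1,2,\dots,d$ in order. Let $X_1,\dots,X_d$ be i.i.d. positive-integer-valued random variables with $\Pr[X_i>n]=p(n)$ for all $n$. Then $$\mathbb{T}_{\mathcal{I}}(A_{\mathrm{simp}})=\Theta\big(d\cdot\mathbb{E}[\max\{X_1,\dots,X_d\}]\big),$$ with universal constants.
   Context: Doors $1,\dots,d$ ($d\ge2$) are initially closed and stay open once opened. In an independent configuration each door $i$ behaves independently of all other doors: $p(n)$ is the probability that a door is still closed after $n$ knocks on it ($p(0)=1$, $p$ non-increasing, $\sum_n p(n)<\infty$), and doors are mutually independent. A knock sequence is executed in order without any feedback; $\mathbb{T}_{\mathcal{I}}(\pi)$ denotes the expected number of knocks until all $d$ doors are open when running the sequence $\pi$. *)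

From HB Require Import structures.
From mathcomp Require Import all_boot all_order all_algebra.
From mathcomp Require Import all_classical all_reals all_analysis.
Set Implicit Arguments. Unset Strict Implicit. Unset Printing Implicit Defensive.
Import Order.TTheory GRing.Theory Num.Theory.
Local Open Scope ring_scope.
Local Open Scope ereal_scope.

(* Doors are labelled 0, ..., d-1.  A knock sequence is a function
   pi : nat -> nat, pi j being the door knocked at step j (0-indexed). *)

Definition knocks (pi : nat -> nat) (i t : nat) : nat :=
  (\sum_(j < t) (pi j == i))%N.

(* Expected number of knocks until all d doors are open, in an independent
   configuration where every door has closing-probability function p, when
   running pi.  Tail-sum formula E[tau] = sum_{t>=0} Pr[tau > t]; by
   independence Pr[tau > t] = 1 - prod_i (1 - p(#knocks on i in first t)). *)
Definition T_indep {R : realType} (d : nat) (p : nat -> R) (pi : nat -> nat)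
  : \bar R :=
  \sum_(t <oo) (1 - \prod_(i < d) (1 - p (knocks pi i t)))%:E.

(* The simple knock sequence (1,2,...,d)^infty (doors relabelled 0..d-1). *)
Definition A_simp (d : nat) : nat -> nat := fun j => (j %% d)%N.

(* E[max(X_1,...,X_d)] for X_i i.i.d. nonnegative-integer valued with
   Pr[X_i > n] = p n: tail sum  sum_{n>=0} Pr[max > n]
   = sum_n (1 - (1 - p n)^d). *)
Definition E_max {R : realType} (d : nat) (p : nat -> R) : \bar R :=
  \sum_(n <oo) (1 - (1 - p n) ^+ d)%:E.

Definition fundamental_distribution {R : realType} (p : nat -> R) : Prop :=
  [/\ p 0%N = 1%R,
      (forall n, 0 <= p n <= 1)%R,
      (forall n, p n.+1 <= p n)%R &
      \sum_(n <oo) (p n)%:E < +oo].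

From HB Require Import structures.
From mathcomp Require Import all_boot all_order all_algebra.
From mathcomp Require Import all_classical all_reals all_analysis.
From mathcomp Require Import lra.
Set Implicit Arguments. Unset Strict Implicit. Unset Printing Implicit Defensive.
Import Order.TTheory GRing.Theory Num.Theory.
Local Open Scope ring_scope.

(* After m * d + r knocks of the simple sequence (r <= d), doors 0, ..., r-1
   have been knocked m + 1 times and the others m times, so some door is still
   closed with probability 1 - (1 - p (m + 1))^r (1 - p m)^(d - r).  Grouping
   the tail sum defining T into blocks of d consecutive knocks, the m-th block
   lies between (d / 2) (1 - (1 - p m)^d) and d (1 - (1 - p m)^d), and
   1 - (1 - p m)^d = Pr[max X_i > m] is the m-th term of the tail sum for
   E[max X_i].  The factor 1/2 comes from pairing the r-th and (d-1-r)-th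
   terms of the block, using (1 - x^a) + (1 - x^b) >= 1 - x^(a+b). *)

Lemma knocksD pi i s t :
  knocks pi i (s + t) = (knocks pi i s + knocks (fun j => pi (s + j)) i t)%N.
Proof. by rewrite /knocks big_split_ord /=. Qed.

Section SimpleSequence.
Variable d : nat.

Lemma knocks_A_simp_shift i m t :
  knocks (fun j => A_simp d (m * d + j)) i t = knocks (A_simp d) i t.
Proof. by apply: eq_bigr => j _; rewrite /A_simp modnMDl. Qed.

Lemma knocks_A_simp_small i t : (i < d)%N -> (t <= d)%N ->
  knocks (A_simp d) i t = (i < t)%N.
Proof.
move=> i_lt_d; elim: t => [|t IH] t_lt_d; first by rewrite /knocks big_ord0.
rewrite /knocks big_ord_recr /= -/(knocks (A_simp d) i t) (IH (ltnW t_lt_d)).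
rewrite /A_simp modn_small //.
by rewrite eq_sym [in RHS]ltnS [in RHS]leq_eqVlt; case: ltngtP.
Qed.

Lemma knocks_A_simp i m r : (i < d)%N -> (r <= d)%N ->
  knocks (A_simp d) i (m * d + r) = (m + (i < r))%N.
Proof.
move=> i_lt_d r_le_d.
rewrite knocksD knocks_A_simp_shift (knocks_A_simp_small i_lt_d r_le_d).
congr (_ + _)%N; elim: m => [|m IH]; first by rewrite mul0n /knocks big_ord0.
rewrite mulSn addnC knocksD knocks_A_simp_shift IH.
by rewrite (knocks_A_simp_small i_lt_d (leqnn d)) i_lt_d addn1.
Qed.
End SimpleSequence.

Lemma sum_one_sub_exprB_ge (R : realFieldType) (x : R) (n : nat) : 0 <= x <= 1 ->
  n%:R / 2 * (1 - x ^+ n) <= \sum_(r < n) (1 - x ^+ (n - r)).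
Proof.
move=> /andP[x_ge0 x_le1].
have pair_ge r : (r < n)%N -> 1 - x ^+ n <= (1 - x ^+ (n - r)) + (1 - x ^+ r.+1).
  move=> r_lt_n.
  have exprD_pair : x ^+ (n - r) * x ^+ r.+1 = x * x ^+ n.
    by rewrite -exprD -exprS addnS subnK // ltnW.
  (* with u = x ^+ (n - r) and v = x ^+ r.+1: (1 - u) (1 - v) >= 0 and
     u v = x * x ^+ n <= x ^+ n *)
  have one_subX_ge0 k : 0 <= 1 - x ^+ k by rewrite subr_ge0 exprn_ile1.
  have := mulr_ge0 (one_subX_ge0 (n - r)%N) (one_subX_ge0 r.+1).
  have := mulr_ge0 (exprn_ge0 n x_ge0) (one_subX_ge0 1%N); rewrite expr1.
  nra.
have rev_sum : \sum_(r < n) (1 - x ^+ (n - r)) = \sum_(r < n) (1 - x ^+ r.+1).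
  by rewrite (reindex_inj rev_ord_inj); apply: eq_bigr => r _; rewrite subKn.
set S := \sum_(r < n) _.
suff : n%:R * (1 - x ^+ n) <= S + S by lra.
rewrite mulr_natl -[X in _ *+ X](card_ord n) -sumr_const {2}/S rev_sum -big_split.
by apply: ler_sum => r _; exact: pair_ge.
Qed.

Section SimpleSequenceTail.
Variables (R : realType) (d : nat) (p : nat -> R).
Hypothesis p01 : forall n, 0 <= p n <= 1.
Hypothesis p_noninc : nonincreasing_seq p.

Definition A_simp_tail t := 1 - \prod_(i < d) (1 - p (knocks (A_simp d) i t)).

Lemma one_subp_ge0_le1 n : 0 <= 1 - p n <= 1.
Proof. by have /andP[? ?] := p01 n; apply/andP; split; lra. Qed.

Lemma A_simp_tail_ge0 t : 0 <= A_simp_tail t.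
Proof. by rewrite subr_ge0; apply: prodr_ile1 => i _; exact: one_subp_ge0_le1. Qed.

Lemma A_simp_tailE m r : (r <= d)%N ->
  A_simp_tail (m * d + r) = 1 - (1 - p m.+1) ^+ r * (1 - p m) ^+ (d - r).
Proof.
move=> r_le_d; congr (1 - _).
under eq_bigr => i _ do rewrite knocks_A_simp //.
rewrite -(big_mkord xpredT (fun i => 1 - p (m + (i < r))%N)) (big_cat_nat (leq0n r) r_le_d) /=.
rewrite -[r in _ ^+ r]subn0 -!prodr_const_nat; congr (_ * _).
- by apply: eq_big_nat => i /andP[_ ->]; rewrite addn1.
- by apply: eq_big_nat => i /andP[]; rewrite leqNgt => /negbTE ->; rewrite addn0.
Qed.

Lemma A_simp_tail_le m r : (r <= d)%N -> A_simp_tail (m * d + r) <= 1 - (1 - p m) ^+ d.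
Proof.
move=> r_le_d; rewrite A_simp_tailE // lerD2l lerN2 -{1}(subnKC r_le_d) exprD.
have /andP[x_ge0 _] := one_subp_ge0_le1 m; have /andP[y_ge0 _] := one_subp_ge0_le1 m.+1.
rewrite ler_wpM2r ?exprn_ge0 // lerXn2r ?nnegrE // lerD2l lerN2.
exact: p_noninc.
Qed.

Lemma A_simp_tail_ge m r : (r <= d)%N -> 1 - (1 - p m) ^+ (d - r) <= A_simp_tail (m * d + r).
Proof.
move=> r_le_d; rewrite A_simp_tailE // lerD2l lerN2.
have /andP[x_ge0 _] := one_subp_ge0_le1 m; have /andP[y_ge0 y_le1] := one_subp_ge0_le1 m.+1.
by rewrite ler_piMl ?exprn_ge0 ?exprn_ile1.
Qed.

Lemma A_simp_block_le m :
  \sum_(r < d) A_simp_tail (m * d + r) <= d%:R * (1 - (1 - p m) ^+ d).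
Proof.
rewrite mulr_natl -[X in _ *+ X](card_ord d) -sumr_const.
by apply: ler_sum => r _; rewrite A_simp_tail_le // ltnW.
Qed.

Lemma A_simp_block_ge m :
  d%:R / 2 * (1 - (1 - p m) ^+ d) <= \sum_(r < d) A_simp_tail (m * d + r).
Proof.
apply: le_trans (sum_one_sub_exprB_ge _ (one_subp_ge0_le1 m)) _.
by apply: ler_sum => r _; rewrite A_simp_tail_ge // ltnW.
Qed.

End SimpleSequenceTail.

Local Open Scope ereal_scope.

Lemma nneseries_block (R : realType) (k : nat) (u : nat -> \bar R) :
  (0 < k)%N -> (forall n, 0 <= u n) ->
  \sum_(t <oo) u t = \sum_(m <oo) \sum_(r < k) u (m * k + r)%N.
Proof.
move=> k_gt0 u_ge0.
have blockE N : \sum_(0 <= t < N * k) u t = \sum_(0 <= m < N) \sum_(r < k) u (m * k + r)%N.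
  rewrite big_nat_mul; apply: eq_bigr => m _.
  rewrite -{1}[(m * k)%N]add0n big_addn mulSn addnK big_mkord.
  by apply: eq_bigr => r _; rewrite addnC.
have block_ge0 m : 0 <= \sum_(r < k) u (m * k + r)%N by rewrite sume_ge0.
apply/le_anti/andP; split; apply: lime_le.
- by apply: is_cvg_nneseries => n _ _; exact: u_ge0.
- apply: nearW => N; apply: (@le_trans _ _ (\sum_(0 <= t < N * k) u t)).
    by apply: lee_sum_nneg_natr => [n _ _|]; [exact: u_ge0 | rewrite leq_pmulr].
  by rewrite blockE; apply: nneseries_lim_ge => m _ _; exact: block_ge0.
- by apply: is_cvg_nneseries => m _ _; exact: block_ge0.
- apply: nearW => N; rewrite -blockE.
  by apply: nneseries_lim_ge => n _ _; exact: u_ge0.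
Qed.

Lemma T_indep_A_simp (R : realType) (d : nat) (p : nat -> R) :
  (0 < d)%N -> (forall n, (0 <= p n <= 1)%R) ->
  T_indep d p (A_simp d) = \sum_(m <oo) (\sum_(r < d) A_simp_tail d p (m * d + r))%:E.
Proof.
move=> d_gt0 p01; rewrite /T_indep (nneseries_block d_gt0); last first.
  by move=> t; rewrite lee_fin A_simp_tail_ge0.
by apply: eq_eseriesr => m _; rewrite sumEFin.
Qed.

Theorem mainTheorem3 (R : realType) :
  exists c1 c2 : R, (0 < c1)%R /\ (0 < c2)%R /\
  forall (d : nat) (p : nat -> R),
    (2 <= d)%N -> fundamental_distribution p ->
    ((c1 * d%:R)%:E * E_max d p <= T_indep d p (A_simp d)) /\
    (T_indep d p (A_simp d) <= (c2 * d%:R)%:E * E_max d p).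
Proof.
exists (1 / 2)%R, 1%R; do 2 split => //.
move=> d p d_ge2 [_ p01 p_step _].
have d_gt0 : (0 < d)%N by exact: leq_trans d_ge2.
have p_noninc : nonincreasing_seq p by apply/nonincreasing_seqP.
have Emax_term_ge0 m : 0 <= (1 - (1 - p m) ^+ d)%:E.
  by rewrite lee_fin subr_ge0; have /andP[] := one_subp_ge0_le1 p01 m; exact: exprn_ile1.
rewrite /E_max (T_indep_A_simp d_gt0 p01) -!nneseriesZl //.
split; apply: lee_nneseries => [m _ _|m _].
- by rewrite mule_ge0.
- by rewrite -EFinM lee_fin mul1r [(_^-1 * _)%R]mulrC (A_simp_block_ge d p01).
- by rewrite lee_fin sumr_ge0 // => r _; exact: A_simp_tail_ge0.
- by rewrite -EFinM lee_fin mul1r (A_simp_block_le d p01 p_noninc).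
Qed.
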